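(* Let $\mathbf{T}^{\{\cap,\cdot,\mathrm{I},\mathrm{D}\}}$ be the set of CoR terms built only from variables and the operations $\cap$, $\cdot$, $\mathrm{I}$, $\mathrm{D}$. If $\mathbf{T}^{\{\cap,\cdot,\mathrm{I},\mathrm{D}\}}_{\le 1}/{\sim_{\mathrm{REL}}}$ is finite, then $(\Sigma^{\mathrm{CoR}}_1)_{\le 1}/{\sim_{\mathrm{REL}}}$ is finite.
   Context: Fix a non-empty finite set $V$ of variables. CoR terms are generated by $t ::= a \mid \bot \mid \top \mid t \cup t \mid t \cap t \mid t^{-} \mid \mathrm{I} \mid \mathrm{D} \mid t \cdot t \mid t \dagger t \mid t^{\pi}$, where $a \in V$ and $\pi$ ranges over all maps $\{1,2\}\to\{1,2\}$. A structure $M$ consists of a non-empty set $|M|$ and a binary relation $a^M\subseteq|M|^2$ for each $a\in V$. The interpretation $[\![t]\!]_M\subseteq|M|^2$: $[\![a]\!]_M=a^M$, $[\![\bot]\!]_M=\emptyset$, $[\![\top]\!]_M=|M|^2$, $\cup,\cap$ set-theoretic, $[\![t^-]\!]_M=|M|^2\setminus[\![t]\!]_M$, $[\![\mathrm{I}]\!]_M=\{(x,y):x=y\}$, $[\![\mathrm{D}]\!]_M=\{(x,y):x\ne y\}$, $R\cdot S=\{(x,y):\exists z,(x,z)\in R\wedge(z,y)\in S\}$, $R\dagger S=\{(x,y):\forall z,(x,z)\in R\vee(z,y)\in S\}$, $R^{\pi}=\{(x_1,x_2):(x_{\pi(1)},x_{\pi(2)})\in R\}$. $t\sim_{\mathrm{REL}}s$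 iff $[\![t]\!]_M=[\![s]\!]_M$ for all structures $M$. $\mathrm{vo}(t)$ is the number of occurrences of variables in $t$, $S_{\le k}=\{t\in S:\mathrm{vo}(t)\le k\}$. $\Sigma^{\mathrm{CoR}}_0$ is the set of terms containing neither $\cdot$ nor $\dagger$, and $\Sigma^{\mathrm{CoR}}_1$ is the least set containing $\Sigma^{\mathrm{CoR}}_0$ and closed under $\cup$, $\cap$, $\cdot$ and $(\cdot)^{\pi}$ for all $\pi$. *)

From mathcomp Require Import all_boot.
From Stdlib Require Import List.
Set Implicit Arguments. Unset Strict Implicit. Unset Printing Implicit Defensive.

(* Positions {1,2} are represented by 'I_2 (0 stands for 1, 1 stands for 2). *)

Inductive term (V : Type) : Type :=
| Var  of V
| Bot
| Top
| Cup  of term V & term V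
| Cap  of term V & term V
| Compl of term V
| Iden
| Diff
| Comp of term V & term V
| Dag  of term V & term V
| Perm of term V & ('I_2 -> 'I_2).

Arguments Bot {V}. Arguments Top {V}. Arguments Iden {V}. Arguments Diff {V}.

Record structure (V : Type) := Structure {
  carrier : Type;
  inhabitant : carrier;
  rel_of : V -> carrier -> carrier -> Prop }.

Definition tup (T : Type) (x1 x2 : T) (i : 'I_2) : T :=
  if val i == 0%N then x1 else x2.

Unset Implicit Arguments.
Fixpoint interp (V : Type) (M : structure V) (t : term V)
  : carrier M -> carrier M -> Prop :=
  match t with
  | Var a => @rel_of V M a
  | Bot => fun _ _ => False
  | Top => fun _ _ => True
  | Cup t s => fun x y => interp V M t x y \/ interp V M s x y
  | Cap t s => fun x y => interp V M t x y /\ interp V M s x y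
  | Compl t => fun x y => ~ interp V M t x y
  | Iden => fun x y => x = y
  | Diff => fun x y => x <> y
  | Comp t s => fun x y => exists z, interp V M t x z /\ interp V M s z y
  | Dag t s => fun x y => forall z, interp V M t x z \/ interp V M s z y
  | Perm t p => fun x1 x2 => interp V M t (tup x1 x2 (p ord0)) (tup x1 x2 (p (@Ordinal 2 1 isT)))
  end.
Set Implicit Arguments.

Definition rel_equiv (V : Type) (t s : term V) : Prop :=
  forall (M : structure V) (x y : carrier M), interp V M t x y <-> interp V M s x y.

Fixpoint vo (V : Type) (t : term V) : nat :=
  match t with
  | Var _ => 1
  | Bot | Top | Iden | Diff => 0
  | Cup t s | Cap t s | Comp t s | Dag t s => vo t + vo s
  | Compl t | Perm t _ => vo t
  end.

Fixpoint in_Sigma0 (V : Type) (t : term V) : Prop :=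
  match t with
  | Var _ | Bot | Top | Iden | Diff => True
  | Cup t s | Cap t s => in_Sigma0 t /\ in_Sigma0 s
  | Compl t | Perm t _ => in_Sigma0 t
  | Comp _ _ | Dag _ _ => False
  end.

Inductive in_Sigma1 (V : Type) : term V -> Prop :=
| S1_base t : in_Sigma0 t -> in_Sigma1 t
| S1_cup t s : in_Sigma1 t -> in_Sigma1 s -> in_Sigma1 (Cup t s)
| S1_cap t s : in_Sigma1 t -> in_Sigma1 s -> in_Sigma1 (Cap t s)
| S1_comp t s : in_Sigma1 t -> in_Sigma1 s -> in_Sigma1 (Comp t s)
| S1_perm t p : in_Sigma1 t -> in_Sigma1 (Perm t p).

Fixpoint in_T_capcompID (V : Type) (t : term V) : Prop :=
  match t with
  | Var _ | Iden | Diff => True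
  | Cap t s | Comp t s => in_T_capcompID t /\ in_T_capcompID s
  | _ => False
  end.

Definition finite_quotient_le (V : Type) (S : term V -> Prop) (k : nat) : Prop :=
  exists reps : list (term V),
    (forall r, In r reps -> S r /\ (vo r <= k)%N) /\
    (forall t, S t -> (vo t <= k)%N -> exists r, In r reps /\ rel_equiv t r).

From Stdlib Require Import List.
From mathcomp Require Import all_boot zify boolp.

(* Let t be a Sigma_1 term with at most one variable occurrence, say of a.  A Sigma_0 term
   in the single variable a is local: whether it relates x to y is a boolean function of
   the atomic type of (x, y), i.e. of the truth values of a(x,y), a(y,x), a(x,x), a(y,y)
   and x = y.  Pushing unions outwards through cap, composition and the position maps, t
   becomes a finite union of {cap, comp, I, D}-terms with at most one variable, that
   variable standing for such a boolean function f.  Every such term is equivalent to one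
   of the finitely many representatives r of T_{<=1}/~REL, evaluated in the structure where
   every variable denotes f.  So t is determined up to ~REL by a together with a subset of
   the finite set of pairs (r, f). *)

Set Bullet Behavior "Strict Subproofs".

Arguments interp {V} M t _ _.
Arguments rel_of {V} s _ _ _.

Definition prod_map {A B C : Type} (op : A -> B -> C) (l1 : list A) (l2 : list B) : list C :=
  List.map (fun p => op p.1 p.2) (list_prod l1 l2).

Lemma In_prod_map {A B C : Type} (op : A -> B -> C) l1 l2 c :
  In c (prod_map op l1 l2) <-> exists a b, [/\ In a l1, In b l2 & c = op a b].
Proof.
rewrite /prod_map in_map_iff; split=> [[[a b] [<- /in_prod_iff [? ?]]]|[a [b [? ? ->]]]].
- by exists a, b.
- by exists (a, b); split=> //; apply: in_prod.
Qed.

Lemma In_nth_ord {T : Type} (x0 : T) (s : list T) x :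
  In x s -> exists i : 'I_(size s), nth x0 s i = x.
Proof.
elim: s => [|y s IHs] //= [->|/IHs [i <-]]; first by exists ord0.
by exists (lift ord0 i); rewrite lift0.
Qed.

Definition pullback {V W : Type} (sigma : V -> W) (M : structure W) : structure V :=
  Structure (inhabitant M) (fun a => rel_of M (sigma a)).

Section Terms.
Context {V : Type}.
Implicit Types (t : term V) (M : structure V).

Fixpoint vars t : list V :=
  match t with
  | Var a => [:: a]
  | Cup t s | Cap t s | Comp t s | Dag t s => vars t ++ vars s
  | Compl t | Perm t _ => vars t
  | Bot | Top | Iden | Diff => [::]
  end.

Lemma vo_vars t : vo t = size (vars t).
Proof. by elim: t => //= t IHt s IHs; rewrite size_cat IHt IHs. Qed.

Lemma vars_le1 (d : V) t : vo t <= 1 -> exists a, Forall (eq a) (vars t).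
Proof.
by rewrite vo_vars; case: (vars t) => [|a [|]] //= _; [exists d | exists a]; constructor.
Qed.

Definition opposite M : structure V :=
  Structure (inhabitant M) (fun a x y => rel_of M a y x).

Lemma interp_eq_rel M (r : V -> carrier M -> carrier M -> Prop) t :
  Forall (fun a => forall x y, rel_of M a x y <-> r a x y) (vars t) ->
  forall x y, interp M t x y <-> interp (Structure (inhabitant M) r) t x y.
Proof.
elim: t => //= [a|t IHt s IHs /Forall_app[/IHt Et /IHs Es]
  |t IHt s IHs /Forall_app[/IHt Et /IHs Es]|t IHt /IHt Et
  |t IHt s IHs /Forall_app[/IHt Et /IHs Es]|t IHt s IHs /Forall_app[/IHt Et /IHs Es]
  |t IHt p /IHt Et].
- exact: Forall_inv.
- by move=> x y; rewrite Et Es.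
- by move=> x y; rewrite Et Es.
- by move=> x y; rewrite Et.
- by move=> x y; split=> -[z [/Et ? /Es ?]]; exists z; split.
- by move=> x y; split=> H z; case: (H z) => [/Et|/Es]; by [left|right].
- by move=> x y; rewrite Et.
Qed.

Fixpoint converse t :=
  match t with
  | Cap t s => Cap (converse t) (converse s)
  | Comp t s => Comp (converse s) (converse t)
  | t => t
  end.

Lemma interp_converse M t : in_T_capcompID t ->
  forall x y, interp M (converse t) x y <-> interp (opposite M) t y x.
Proof.
elim: t => //= [t IHt s IHs [/IHt Et /IHs Es]|||t IHt s IHs [/IHt Et /IHs Es]] x y.
- by rewrite Et Es.
- by split=> ->.
- by split=> Hxy Hyx; apply: Hxy.
- by split=> -[z [H1 H2]]; exists z; split; [apply/Et|apply/Es|apply/Es|apply/Et].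
Qed.

Lemma converse_T t : in_T_capcompID t -> in_T_capcompID (converse t) /\ vo (converse t) = vo t.
Proof. elim: t => //= t IHt s IHs [/IHt [? ->] /IHs [? ->]]; split=> //; exact: addnC. Qed.

Fixpoint rename {W : Type} (sigma : V -> W) t : term W :=
  match t with
  | Var a => Var (sigma a)
  | Bot => Bot | Top => Top | Iden => Iden | Diff => Diff
  | Cup t s => Cup (rename sigma t) (rename sigma s)
  | Cap t s => Cap (rename sigma t) (rename sigma s)
  | Compl t => Compl (rename sigma t)
  | Comp t s => Comp (rename sigma t) (rename sigma s)
  | Dag t s => Dag (rename sigma t) (rename sigma s)
  | Perm t p => Perm (rename sigma t) p
  end.

Lemma rename_T {W : Type} (sigma : V -> W) t :
  in_T_capcompID t -> in_T_capcompID (rename sigma t) /\ vo (rename sigma t) = vo t.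
Proof. by elim: t => //= t IHt s IHs [/IHt [? ->] /IHs [? ->]]. Qed.

Lemma interp_rename {W : Type} (sigma : V -> W) (M : structure W) t x y :
  interp M (rename sigma t) x y <-> interp (pullback sigma M) t x y.
Proof.
elim: t x y => //= [t IHt s IHs|t IHt s IHs|t IHt|t IHt s IHs|t IHt s IHs] x y.
- by rewrite IHt IHs.
- by rewrite IHt IHs.
- by rewrite IHt.
- by split=> -[z [H1 H2]]; exists z; split; [apply/IHt|apply/IHs|apply/IHt|apply/IHs].
- by split=> H z; case: (H z) => [/IHt|/IHs]; by [left|right].
Qed.

End Terms.

Lemma interp_rename_const_le1 {V W : Type} (d : W) (a : V) (u : term W) : vo u <= 1 ->
  exists f : W, forall (N : structure W) x y,
    interp N u x y <-> interp (pullback (fun _ : V => f) N) (rename (fun _ => a) u) x y.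
Proof.
move=> /(vars_le1 d) [f onlyf]; exists f => N x y.
rewrite interp_rename; apply: interp_eq_rel.
by apply: Forall_impl onlyf => _ <-.
Qed.

Lemma finite_quotient_le_index {V : Type} (S : term V -> Prop) k :
  finite_quotient_le S k ->
  exists n (rep : 'I_n -> term V), forall t, S t -> vo t <= k -> exists i, rel_equiv t (rep i).
Proof.
case=> reps [_ cover]; exists (size reps), (nth Bot reps) => t St vot.
have [r [/(In_nth_ord Bot) [i ri] tr]] := cover t St vot.
by exists i; rewrite ri.
Qed.

Lemma finite_quotient_le_of_classes {V : Type} (K : finType)
    (den : K -> forall M : structure V, carrier M -> carrier M -> Prop) (S : term V -> Prop) k :
  (forall t, S t -> vo t <= k -> exists c, forall M x y, interp M t x y <-> den c M x y) ->
  finite_quotient_le S k.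
Proof.
move=> classify.
pose of_class t c := [/\ S t, vo t <= k & forall M x y, interp M t x y <-> den c M x y].
suff [reps [reps_ok reps_cover]] : exists reps, (forall r, In r reps -> S r /\ vo r <= k) /\
    forall c, c \in enum K -> forall t, of_class t c -> exists r, In r reps /\ of_class r c.
  exists reps; split=> // t St vot.
  have [c tc] := classify t St vot.
  have [r [r_in [_ _ rc]]] := reps_cover c (mem_enum _ c) t (And3 St vot tc).
  by exists r; split=> // M x y; rewrite tc rc.
elim: (enum K) => [|c cs [reps [reps_ok reps_cover]]]; first by exists [::].
have [[t0 t0c]|no_rep] := pselect (exists t, of_class t c).
- exists (t0 :: reps); split=> [r [<-|/reps_ok //]|c'].
  + by case: t0c.
  + rewrite inE => /predU1P [-> t _|c'_in t tc'].
    * by exists t0; split=> //; left.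
    * by have [r [r_in rc']] := reps_cover c' c'_in t tc'; exists r; split=> //; right.
- exists reps; split=> // c'; rewrite inE => /predU1P [-> t tc|c'_in].
  + by case: no_rep; exists t.
  + exact: reps_cover.
Qed.

Definition atype := (bool * bool * bool * bool * bool)%type.

Definition aformula := {ffun atype -> bool}.

Section AtomicTypes.
Context {V : Type}.
Implicit Types (t : term V) (M : structure V).

Definition atype_of (a : V) M (x y : carrier M) : atype :=
  (`[< rel_of M a x y >], `[< rel_of M a y x >], `[< rel_of M a x x >],
   `[< rel_of M a y y >], `[< x = y >]).

Definition relabel (c0 c1 : bool) (b : atype) : atype :=
  let: (rxy, ryx, rxx, ryy, e) := b in
  match c0, c1 with
  | true, true => (rxx, rxx, rxx, rxx, true)
  | true, false => b
  | false, true => (ryx, rxy, ryy, rxx, e)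
  | false, false => (ryy, ryy, ryy, ryy, true)
  end.

Lemma relabel_swapK : involutive (relabel false true).
Proof. by case=> [[[[]]]]. Qed.

Lemma atype_of_relabel a M x y c0 c1 :
  atype_of a M (if c0 then x else y) (if c1 then x else y) = relabel c0 c1 (atype_of a M x y).
Proof.
have sym_eq_xy : `[< y = x >] = `[< x = y >] by apply: asbool_equiv_eq; split=> ->.
by case: c0 c1 => [] []; rewrite /atype_of ?sym_eq_xy ?(asboolT (erefl _)).
Qed.

Lemma atype_of_swap a M x y : atype_of a M y x = relabel false true (atype_of a M x y).
Proof. exact: (atype_of_relabel a M x y false true). Qed.

Lemma sigma0_local a t : in_Sigma0 t -> Forall (eq a) (vars t) ->
  exists f : atype -> bool, forall M x y, interp M t x y <-> f (atype_of a M x y).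
Proof.
elim: t => //= [b _ /Forall_cons_iff [<- _]|_ _|_ _
  |t IHt s IHs [/IHt IHt' /IHs IHs'] /Forall_app [/IHt' [f Ef] /IHs' [g Eg]]
  |t IHt s IHs [/IHt IHt' /IHs IHs'] /Forall_app [/IHt' [f Ef] /IHs' [g Eg]]
  |t IHt /IHt IHt' /IHt' [f Ef]|||t IHt p /IHt IHt' /IHt' [f Ef]].
- by exists (fun b => b.1.1.1.1) => M x y; rewrite /atype_of /=; apply: (rwP (asboolP _)).
- by exists (fun _ => false).
- by exists (fun _ => true).
- by exists (fun b => f b || g b) => M x y; rewrite Ef Eg; apply: (rwP orP).
- by exists (fun b => f b && g b) => M x y; rewrite Ef Eg; apply: (rwP andP).
- by exists (fun b => ~~ f b) => M x y; rewrite Ef; apply: (rwP negP).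
- by exists (fun b => b.2) => M x y; rewrite /atype_of /=; apply: (rwP (asboolP _)).
- by exists (fun b => ~~ b.2) => M x y; rewrite /atype_of /=; apply: (rwP (asboolPn _)).
- exists (fun b => f (relabel (val (p ord0) == 0) (val (p (@Ordinal 2 1 isT)) == 0) b)) => M x y.
  by rewrite Ef /tup atype_of_relabel.
Qed.

End AtomicTypes.

Section LocalNormalForm.
Context {V : Type}.
Implicit Types (t : term V) (M : structure V) (u : term aformula) (l : list (term aformula)).

Definition formula_struct (a : V) M : structure aformula :=
  Structure (inhabitant M) (fun (f : aformula) x y => f (atype_of a M x y)).

Definition local_union (a : V) l M (x y : carrier M) : Prop :=
  exists2 u, In u l & interp (formula_struct a M) u x y.

Lemma local_union_seq1 a u M x y :
  local_union a [:: u] M x y <-> interp (formula_struct a M) u x y.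
Proof. by split=> [[_ [<-|[]]]|]; last (exists u; first left). Qed.

Lemma local_union_nil a M x y : local_union a [::] M x y <-> False.
Proof. by split=> [[]|]. Qed.

Lemma local_union_app a l1 l2 M x y :
  local_union a (l1 ++ l2) M x y <-> local_union a l1 M x y \/ local_union a l2 M x y.
Proof.
split=> [[u /in_app_iff [] ? ?]|[] [u ? ?]].
- by left; exists u.
- by right; exists u.
- by exists u => //; apply/in_app_iff; left.
- by exists u => //; apply/in_app_iff; right.
Qed.

Lemma local_union_cap a l1 l2 M x y :
  local_union a (prod_map (@Cap _) l1 l2) M x y <->
  local_union a l1 M x y /\ local_union a l2 M x y.
Proof.
split=> [[_ /In_prod_map [u1 [u2 [? ? ->]]] [? ?]]|[[u1 ? ?] [u2 ? ?]]].
- by split; [exists u1|exists u2].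
- by exists (Cap u1 u2) => //; apply/In_prod_map; exists u1, u2.
Qed.

Lemma local_union_comp a l1 l2 M x y :
  local_union a (prod_map (@Comp _) l1 l2) M x y <->
  exists z, local_union a l1 M x z /\ local_union a l2 M z y.
Proof.
split=> [[_ /In_prod_map [u1 [u2 [? ? ->]]] [z [? ?]]]|[z [[u1 ? ?] [u2 ? ?]]]].
- by exists z; split; [exists u1|exists u2].
- by exists (Comp u1 u2); [apply/In_prod_map; exists u1, u2 | exists z].
Qed.

Lemma local_union_flat_map a (g : term aformula -> list (term aformula)) l M x y :
  local_union a (flat_map g l) M x y <-> exists2 u, In u l & local_union a (g u) M x y.
Proof.
split=> [[u /in_flat_map [u0 [? ?]] ?]|[u0 ? [u ? ?]]].
- by exists u0 => //; exists u.
- by exists u => //; apply/in_flat_map; exists u0.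
Qed.

Lemma sigma0_local_nf a t : in_Sigma0 t -> Forall (eq a) (vars t) ->
  exists l, (forall u, In u l -> in_T_capcompID u /\ vo u <= vo t) /\
            forall M x y, interp M t x y <-> local_union a l M x y.
Proof.
move=> S0t onlya; have [f Ef] := sigma0_local _ _ S0t onlya.
have [vo0|vo_pos] := posnP (vo t).
- exists ((if f (false, false, false, false, true) then [:: Iden] else [::]) ++
          (if f (false, false, false, false, false) then [:: Diff] else [::])).
  split=> [u|M x y].
  + by move/in_app_iff => -[]; case: ifP => _ //= [<-|[]].
  + (* A variable-free term ignores the relations, so evaluate it with empty ones. *)
    have vars0 : vars t = [::] by apply/size0nil; rewrite -vo_vars.
    rewrite (interp_eq_rel M (fun _ _ _ => False) t) ?vars0 // Ef local_union_app.
    rewrite /atype_of /= !(asboolF (@id False)).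
    case: (asboolP (x = y)) => [<-|nxy];
      case: (f (false, false, false, false, true)); case: (f (false, false, false, false, false));
      rewrite /= ?local_union_seq1 ?local_union_nil /=; intuition congruence.
- exists [:: Var [ffun b => f b]]; split=> [_ [<-|[]] //|M x y].
  by rewrite Ef local_union_seq1 /= ffunE.
Qed.

Definition swap_formula (f : aformula) : aformula := [ffun b => f (relabel false true b)].

(* [u] at (x, x) is [(u \cap I) . Top] with [Top = I \cup D]; the swap is the converse,
   whose variables must read the swapped atomic type. *)
Definition perm_nf (c0 c1 : bool) u : list (term aformula) :=
  match c0, c1 with
  | true, false => [:: u]
  | false, true => [:: rename swap_formula (converse u)]
  | true, true => [:: Comp (Cap u Iden) Iden; Comp (Cap u Iden) Diff]
  | false, false => [:: Comp Iden (Cap u Iden); Comp Diff (Cap u Iden)]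
  end.

Lemma perm_nf_T c0 c1 u u' : in_T_capcompID u -> In u' (perm_nf c0 c1 u) ->
  in_T_capcompID u' /\ vo u' = vo u.
Proof.
move=> Tu; case: c0 c1 => [] [] /=.
- by case=> [<-|[<-|[]]] /=; rewrite !addn0.
- by case=> [<-|[]].
- case=> [<-|[]]; have [Tc <-] := converse_T _ Tu; exact: rename_T.
- by case=> [<-|[<-|[]]] /=; rewrite add0n addn0.
Qed.

Lemma interp_swap_converse a M u x y : in_T_capcompID u ->
  interp (formula_struct a M) (rename swap_formula (converse u)) x y <->
  interp (formula_struct a M) u y x.
Proof.
move=> Tu; rewrite interp_rename interp_converse //; symmetry.
apply: interp_eq_rel; apply/Forall_forall => f _ x' y' /=.
by rewrite ffunE (atype_of_swap a M x' y') relabel_swapK.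
Qed.

Lemma perm_nf_spec a M c0 c1 u x y : in_T_capcompID u ->
  interp (formula_struct a M) u (if c0 then x else y) (if c1 then x else y) <->
  local_union a (perm_nf c0 c1 u) M x y.
Proof.
move=> Tu; case: c0 c1 => [] []; cbn [perm_nf].
- split=> [uxx|[_ [<-|[<-|[]]] [z [[uxz xz] _]]]]; try by subst.
  have [<-|nxy] := pselect (x = y).
  + by exists (Comp (Cap u Iden) Iden); [left | exists x].
  + by exists (Comp (Cap u Iden) Diff); [right; left | exists x].
- by rewrite local_union_seq1.
- by rewrite local_union_seq1 interp_swap_converse.
- split=> [uyy|[_ [<-|[<-|[]]] [z [_ [uzy zy]]]]]; try by subst.
  have [->|nxy] := pselect (x = y).
  + by exists (Comp Iden (Cap u Iden)); [left | exists y].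
  + by exists (Comp Diff (Cap u Iden)); [right; left | exists y].
Qed.

Lemma sigma1_local_nf a t : in_Sigma1 t -> Forall (eq a) (vars t) ->
  exists l, (forall u, In u l -> in_T_capcompID u /\ vo u <= vo t) /\
            forall M x y, interp M t x y <-> local_union a l M x y.
Proof.
elim=> {t} [t S0t|t s _ IHt _ IHs|t s _ IHt _ IHs|t s _ IHt _ IHs|t p _ IHt] /=.
- exact: sigma0_local_nf.
- move/Forall_app=> [/IHt [lt [Tt Et]] /IHs [ls [Ts Es]]].
  exists (lt ++ ls); split=> [u /in_app_iff [/Tt|/Ts] [? ?]|M x y]; try (split=> //; lia).
  by rewrite local_union_app Et Es.
- move/Forall_app=> [/IHt [lt [Tt Et]] /IHs [ls [Ts Es]]].
  exists (prod_map (@Cap _) lt ls).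
  split=> [_ /In_prod_map [u1 [u2 [/Tt [? ?] /Ts [? ?] ->]]]|M x y].
  + by split=> //=; lia.
  + by rewrite local_union_cap Et Es.
- move/Forall_app=> [/IHt [lt [Tt Et]] /IHs [ls [Ts Es]]].
  exists (prod_map (@Comp _) lt ls).
  split=> [_ /In_prod_map [u1 [u2 [/Tt [? ?] /Ts [? ?] ->]]]|M x y].
  + by split=> //=; lia.
  + by rewrite local_union_comp; split=> -[z [/Et ? /Es ?]]; exists z.
- move/IHt=> [l [Tl El]].
  exists (flat_map (perm_nf (val (p ord0) == 0) (val (p (@Ordinal 2 1 isT)) == 0)) l); split.
  + by move=> u /in_flat_map [u0 [/Tl [Tu0 ?] /(perm_nf_T _ _ _ _ Tu0) [? ->]]].
  + move=> M x y; rewrite /tup El local_union_flat_map.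
    by split=> -[u lu Hu]; exists u => //; apply/perm_nf_spec => //; case: (Tl u lu).
Qed.

Definition uniform_struct (a : V) (f : aformula) M : structure V :=
  pullback (fun _ : V => f) (formula_struct a M).

Lemma local_T_le1_rep a {n : nat} {rep : 'I_n -> term V} :
  (forall t, in_T_capcompID t -> vo t <= 1 -> exists i, rel_equiv t (rep i)) ->
  forall u, in_T_capcompID u -> vo u <= 1 -> exists i f, forall M x y,
    interp (formula_struct a M) u x y <-> interp (uniform_struct a f M) (rep i) x y.
Proof.
move=> rep_cover u Tu vou.
have [f Ef] := interp_rename_const_le1 [ffun _ => false] a u vou.
have [Tu' vou'] := rename_T (fun _ => a) u Tu.
have [i Ei] := rep_cover _ Tu' (leq_trans (eq_leq vou') vou).
by exists i, f => M x y; rewrite Ef; apply: Ei.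
Qed.

End LocalNormalForm.

Theorem lemma4p9 (V : finType) (HV : (0 < #|V|)%N) :
  finite_quotient_le (@in_T_capcompID V) 1 ->
  finite_quotient_le (@in_Sigma1 V) 1.
Proof.
move=> /finite_quotient_le_index [n [rep rep_cover]].
have [a0 _] := card_gt0P HV.
pose den (c : V * {set 'I_n * aformula}) (M : structure V) (x y : carrier M) :=
  exists2 p, p \in c.2 & interp (uniform_struct c.1 p.2 M) (rep p.1) x y.
apply: (finite_quotient_le_of_classes _ den) => t S1t vot.
have [a onlya] := vars_le1 a0 t vot.
have [l [Tl El]] := sigma1_local_nf a t S1t onlya.
pose represents u (p : 'I_n * aformula) := forall M x y,
  interp (formula_struct a M) u x y <-> interp (uniform_struct a p.2 M) (rep p.1) x y.
exists (a, [set p | `[< exists2 u, In u l & represents u p >]]) => M x y.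
rewrite El; split=> [[u ul uxy]|[p /[!inE] /asboolP [u ul up] pxy]].
- have [Tu vou] := Tl u ul.
  have [i [f uif]] := local_T_le1_rep a rep_cover u Tu (leq_trans vou vot).
  by exists (i, f); [rewrite inE; apply/asboolP; exists u | apply/uif].
- by exists u => //; apply/up.
Qed.
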